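(* Let $f_0(n)=1$ for odd $n$ and $f_0(n)=0$ for even $n$. Then for $1\le k\le n$, $c_1(n,k)$ equals the number of binary words of length $n-1$ with exactly $k-1$ ones that avoid runs of zeros of odd length (every maximal block of consecutive zeros has even length).
   Context: The numbers $c_1(n,k)$, $0\le k\le n$, are defined by $c_1(0,0)=1$, $c_1(n,0)=0$ for $n\ge1$, and $c_1(n,k)=\sum_{i=1}^{n-k+1}f_{0}(i)\,c_1(n-i,k-1)$ for $1\le k\le n$. Words may be empty. *)

From mathcomp Require Import all_boot.
Set Implicit Arguments. Unset Strict Implicit. Unset Printing Implicit Defensive.

Definition f0 (n : nat) : nat := odd n.

Fixpoint c1 (n k : nat) {struct k} : nat :=
  match k with
  | 0 => (n == 0)
  | k'.+1 => \sum_(1 <= i < (n - k).+2) f0 i * c1 (n - i) k'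
  end.

(* A maximal block of zeros of w occupies positions i, ..., j-1 (i < j):
   all these are false (= zero), and it is bounded by a one or the word's ends. *)
Definition maximal_zero_run (w : seq bool) (i j : nat) : bool :=
  [&& i < j, j <= size w,
      all (fun p => ~~ nth false w p) (iota i (j - i)),
      (i == 0) || nth false w i.-1
    & (j == size w) || nth false w j].

Definition avoids_odd_zero_runs (w : seq bool) : bool :=
  all (fun i => all (fun j => maximal_zero_run w i j ==> ~~ odd (j - i))
                    (iota 0 (size w).+1))
      (iota 0 (size w).+1).

From mathcomp Require Import all_boot zify.

(* A word avoids odd runs of zeros iff it factors into the blocks [1] and [00].
   Splitting off the first block, the number [N m j] of such words of length [m]
   with [j] ones satisfies [N (m+2) j = N m j + N (m+1) (j-1)], which unrolls to
   [N m (j+1) = \sum_(1 <= i <= m, i odd) N (m-i) j]: the first one is preceded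
   by an even number [i-1] of zeros.  This is the recursion defining [c1], up to
   the shift [c1 (m+1) (k+1) = N m k]. *)

Fixpoint bool_words (m : nat) : seq (seq bool) :=
  if m is m'.+1 then map (cons false) (bool_words m') ++ map (cons true) (bool_words m')
  else [:: [::]].

Lemma bool_wordsS m :
  bool_words m.+1 = map (cons false) (bool_words m) ++ map (cons true) (bool_words m).
Proof. by []. Qed.

Lemma mem_bool_words m s : (s \in bool_words m) = (size s == m).
Proof.
elim: m s => [|m IH] [|b s] //=; rewrite mem_cat.
  by apply/negbTE/norP; split; apply/mapP => -[].
rewrite eqSS -IH; apply/orP/idP => [[] /mapP[t Wt [_ ->]] // | Ws].
by case: b; [right | left]; apply: map_f.
Qed.

Lemma uniq_bool_words m : uniq (bool_words m).
Proof.
elim: m => [|m IH] //=; rewrite cat_uniq !map_inj_uniq ?IH /=; try by move=> s t [].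
by rewrite andbT; apply/hasPn => _ /mapP[s _ ->]; apply/mapP => -[].
Qed.

Lemma card_tuples_count m (P : pred (seq bool)) :
  #|[set w : m.-tuple bool | P w]| = count P (bool_words m).
Proof.
have /permP <- : perm_eq (map val (enum {: m.-tuple bool})) (bool_words m).
  apply: uniq_perm; rewrite ?uniq_bool_words ?(map_inj_uniq val_inj) ?enum_uniq // => s.
  rewrite mem_bool_words; apply/mapP/eqP => [[t _ ->] | size_s]; first exact: size_tuple.
  by exists (Tuple (introT eqP size_s)); rewrite ?mem_enum.
by rewrite enumT count_map cardsE cardE /enum_mem size_filter.
Qed.

Lemma iota_succ i n : iota i.+1 n = map succn (iota i n).
Proof. by rewrite -add1n iotaDl. Qed.

Lemma maximal_zero_run0 w j : maximal_zero_run w 0 j = (0 < j) && (find id w == j).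
Proof.
rewrite /maximal_zero_run subn0 /=; congr (_ && _).
elim: w j => [|b w IH] [|j] //=; first by case: b.
rewrite ltnS iota_succ all_map.
by case: b => //=; rewrite andbF.
Qed.

Lemma maximal_zero_run_consS b w i j :
  maximal_zero_run (b :: w) i.+1 j.+1 = maximal_zero_run w i j && ((i != 0) || b).
Proof.
rewrite /maximal_zero_run /= !ltnS eqSS subSS iota_succ all_map.
by case: i => [|i] /=; [case: b; rewrite ?(andbF, andFb, andbT, andTb) | rewrite andbT].
Qed.

Lemma avoidsP w :
  reflect (forall i j, maximal_zero_run w i j -> ~~ odd (j - i)) (avoids_odd_zero_runs w).
Proof.
apply: (iffP allP) => [avoid_w i j run_ij | avoid_w i _].
  have /and5P[lt_ij le_jw _ _ _] := run_ij.
  have i_in : i \in iota 0 (size w).+1 by rewrite mem_iota; lia.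
  have j_in : j \in iota 0 (size w).+1 by rewrite mem_iota; lia.
  by move: (allP (avoid_w i i_in) j j_in); rewrite run_ij.
by apply/allP => j _; apply/implyP/avoid_w.
Qed.

Lemma avoids_cons_true w : avoids_odd_zero_runs (true :: w) = avoids_odd_zero_runs w.
Proof.
apply/avoidsP/avoidsP => avoid_w i j.
  by move=> run_ij; rewrite -subSS; apply: avoid_w; rewrite maximal_zero_run_consS run_ij orbT.
case: i j => [|i] [|j] //; first by rewrite maximal_zero_run0.
by rewrite maximal_zero_run_consS orbT andbT subSS; apply: avoid_w.
Qed.

(* The runs of [0 0 w] are those of [w] shifted by two, except that a leading
   run of [w] (possibly empty) absorbs the two new zeros. *)
Lemma avoids_cons_false_false w :
  avoids_odd_zero_runs [:: false, false & w] = avoids_odd_zero_runs w.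
Proof.
apply/avoidsP/avoidsP => avoid_w i j.
  case: i j => [|i] [|j] //.
    rewrite maximal_zero_run0 => /andP[_ /eqP find_j].
    by have := avoid_w 0 j.+3; rewrite maximal_zero_run0 /= find_j eqxx !negbK; apply.
  move=> run_ij; have := avoid_w i.+3 j.+3; rewrite !subSS; apply.
  by rewrite !maximal_zero_run_consS run_ij.
case: i j => [|[|i]] [|[|j]] //=.
- rewrite maximal_zero_run0 /= => /eqP[find_j].
  case: j find_j => [|j] // find_j.
  by have := avoid_w 0 j.+1; rewrite maximal_zero_run0 find_j eqxx /= !negbK; apply.
- by case/and5P.
- by rewrite !maximal_zero_run_consS !subSS => /andP[/andP[/avoid_w]].
Qed.

Lemma avoids_cons_false_true w : avoids_odd_zero_runs [:: false, true & w] = false.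
Proof. by apply/negbTE/avoidsP => /(_ 0 1); rewrite maximal_zero_run0 => /(_ isT). Qed.

Definition avoiding_count m j :=
  count (fun w => (count id w == j) && avoids_odd_zero_runs w) (bool_words m).

Lemma avoiding_count0 j : avoiding_count 0 j = (j == 0).
Proof. by case: j. Qed.

Lemma avoiding_count1 j : avoiding_count 1 j = (j == 1).
Proof. by case: j => [|[|j]]. Qed.

Lemma avoiding_countSS m j :
  avoiding_count m.+2 j = avoiding_count m j + (if j is j'.+1 then avoiding_count m.+1 j' else 0).
Proof.
rewrite {1}/avoiding_count bool_wordsS count_cat !count_map; congr (_ + _).
  rewrite bool_wordsS count_cat !count_map [X in _ + X](eq_count (a2 := pred0)).
    by rewrite count_pred0 addn0; apply: eq_count => w /=; rewrite avoids_cons_false_false.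
  by move=> w /=; rewrite avoids_cons_false_true andbF.
case: j => [|j]; last by apply: eq_count => w /=; rewrite avoids_cons_true.
by rewrite (eq_count (a2 := pred0)) ?count_pred0.
Qed.

Lemma avoiding_count_gt m j : m < j -> avoiding_count m j = 0.
Proof.
move=> lt_mj; apply/eqP; rewrite -leqn0 leqNgt -has_count; apply/hasPn => w.
rewrite mem_bool_words => /eqP size_w /=; apply/negP => /andP[/eqP count_w _].
by move: (count_size id w); rewrite count_w size_w leqNgt lt_mj.
Qed.

Lemma avoiding_count_no_ones m : avoiding_count m 0 = ~~ odd m.
Proof.
elim/ltn_ind: m => -[|[|m]] IH //.
by rewrite avoiding_countSS addn0 IH //= negbK.
Qed.

Lemma avoiding_count_first_one m j :
  avoiding_count m j.+1 = \sum_(1 <= i < m.+1) f0 i * avoiding_count (m - i) j.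
Proof.
elim/ltn_ind: m => -[|[|m]] IH.
- by rewrite avoiding_count0 big_geq.
- by rewrite avoiding_count1 big_nat1 avoiding_count0 /f0 /= mul1n.
rewrite avoiding_countSS IH // [RHS]big_nat_recl // [in RHS]big_nat_recl //.
rewrite /f0 /= mul1n mul0n add0n subn1 addnC; congr (_ + _).
by apply: eq_bigr => i _; rewrite !subSS negbK.
Qed.

(* [k <= m] is needed: truncated subtraction in the bound of [c1] gives junk
   values such as [c1 1 2 = c1 0 1 = 1]. *)
Lemma c1_avoiding_count m k : k <= m -> c1 m.+1 k.+1 = avoiding_count m k.
Proof.
elim: k m => [|k IH] m le_km.
  rewrite avoiding_count_no_ones /= subn1 big_nat_recr //= subnn muln1 big_nat_cond big1 //.
  by move=> i /andP[/andP[_ lt_im] _]; rewrite subn_eq0 leqNgt lt_im muln0.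
have -> : c1 m.+1 k.+2 = \sum_(1 <= i < (m - k).+1) f0 i * c1 (m.+1 - i) k.+1.
  by rewrite /=; congr (\sum_(1 <= i < _) _); lia.
rewrite avoiding_count_first_one [RHS](@big_cat_nat _ _ _ (m - k).+1); [|lia|lia].
have -> : \sum_((m - k).+1 <= i < m.+1) f0 i * avoiding_count (m - i) k = 0.
  rewrite big_nat_cond big1 // => i /andP[/andP[ge_i lt_i] _].
  by rewrite avoiding_count_gt ?muln0 //; lia.
rewrite Monoid.mulm1; apply: eq_big_nat => i /andP[i_gt0 lt_i].
by rewrite subSn ?IH //; lia.
Qed.

Theorem corollary22 (n k : nat) : 1 <= k <= n ->
  c1 n k = #|[set w : (n.-1).-tuple bool |
               (count id w == k.-1) && avoids_odd_zero_runs w]|.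
Proof.
case: n k => [|n] [|k] // /andP[_ le_kn].
by rewrite c1_avoiding_count // /avoiding_count -card_tuples_count.
Qed.
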